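(* Let $\mathcal{N}$ be a fully-connected feed-forward network with layer widths $n_0=d,n_1,\dots,n_H=1$, mass $\Psi=\prod_{i=0}^H n_i$ and with weight set $\mathcal{W}=\{w_1,\dots,w_N\}$ of real numbers, whose expected output is \[ Y_N = q\sum_{i_1,\dots,i_H=1}^{N}\ \sum_{j=1}^{r_{i_1,\dots,i_H}} X^{(j)}_{i_1,\dots,i_H}\,\rho\prod_{k=1}^H w_{i_k}, \] where $q=\Psi^{-(H-1)/(2H)}$, $\rho\in(0,1]$, $r_{i_1,\dots,i_H}\in\{0,1\}$ indicates whether the ordered weight configuration $(w_{i_1},\dots,w_{i_H})$ is the sequence of weights along some input-to-output path (so $\sum r_{i_1,\dots,i_H}=\Psi$), and the $X^{(j)}_{i_1,\dots,i_H}$ are independent $N(0,1)$ random variables. Let $\mathcal{M}$ be an $(s,\epsilon)$-reduction image of $\mathcal{N}$ for some $s\le N$ and $\epsilon\in[0,0.5]$, and let $Y_s$ be the expected output of $\mathcal{M}$ (defined by the same formula with $\mathcal{M}$'s edge weights). Then \[ \mathrm{corr}(\mathrm{sign}(Y_s),\mathrm{sign}(Y_N))\ \ge\ \frac{1-2\epsilon}{1+2\epsilon}, \] where $\mathrm{corr}(A,B)=\frac{\mathbb{E}[(A-\mathbb{E}A)(B-\mathbb{E}B)]}{\mathrm{std}(A)\,\mathrm{std}(B)}$.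
   Context: A network $\mathcal{M}$ is an $(s,\epsilon)$-reduction image of $\mathcal{N}$ (for $\epsilon\in[0,1]$) if it has the same graph of connections as $\mathcal{N}$ but its edge weights take only $s\le N$ distinct values, and the prediction accuracies of $\mathcal{N}$ and $\mathcal{M}$ differ by no more than $\epsilon$, i.e. they classify at most an $\epsilon$ fraction of data points differently (the prediction being the sign of the output; $\mathrm{sign}(Y_s)$ and $\mathrm{sign}(Y_N)$ are random, with randomness coming from the inputs $X$). *)

From HB Require Import structures.
From mathcomp Require Import all_boot all_order all_algebra.
From mathcomp Require Import all_classical all_reals all_analysis.
Set Implicit Arguments. Unset Strict Implicit. Unset Printing Implicit Defensive.
Import Order.TTheory GRing.Theory Num.Theory.
Local Open Scope classical_set_scope.
Local Open Scope ring_scope.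

(* The weight of the edge from node a
   of layer k-1 to node b of layer k (1 <= k <= H, a < n (k-1), b < n k) is
   w k a b. *)

Definition npath (n : nat -> nat) (H : nat) := {dffun forall k : 'I_H.+1, 'I_(n k)}.

Definition path_weight {R : realType} (n : nat -> nat) (H : nat)
  (w : nat -> nat -> nat -> R) (p : npath n H) : R :=
  \prod_(k < H) w k.+1 (p (widen_ord (leqnSn H) k) : nat) (p (lift ord0 k) : nat).

Definition mass (n : nat -> nat) (H : nat) : nat := \prod_(i < H.+1) n i.

Definition qcoef {R : realType} (n : nat -> nat) (H : nat) : R :=
  powR ((mass n H)%:R) (- ((H%:R - 1) / (2 * H%:R))).

Definition output {R : realType} {T : Type} (n : nat -> nat) (H : nat) (rho : R)
  (w : nat -> nat -> nat -> R) (X : npath n H -> T -> R) : T -> R :=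
  fun t => qcoef n H * \sum_(p : npath n H) X p t * rho * path_weight w p.

Arguments output {R T n H} rho w X _.

Definition edges (n : nat -> nat) (H : nat) : seq (nat * nat * nat) :=
  flatten [seq [seq (k, a, b) | a <- iota 0 (n k.-1), b <- iota 0 (n k)] | k <- iota 1 H].

Definition nweights (n : nat -> nat) (H : nat) : nat := size (edges n H).

Definition ndistinct {R : realType} (n : nat -> nat) (H : nat)
  (w : nat -> nat -> nat -> R) : nat :=
  size (undup [seq w e.1.1 e.1.2 e.2 | e <- edges n H]).

Definition std_normal {d} {T : measurableType d} {R : realType}
  (P : probability T R) (X : T -> R) : Prop :=
  measurable_fun setT X /\
  forall B : set R, measurable B -> P (X @^-1` B) = normal_prob 0 1 B.

Definition mutually_independent {d} {T : measurableType d} {R : realType}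
  (I : finType) (P : probability T R) (X : I -> T -> R) : Prop :=
  forall B : I -> set R, (forall i, measurable (B i)) ->
    P (\bigcap_(i in [set: I]) (X i @^-1` B i)) =
    (\prod_(i : I) P (X i @^-1` B i))%E.

Definition rsign {R : realType} {T : Type} (Y : T -> R) : T -> R :=
  fun t => Num.sg (Y t).

Definition corr {d} {T : measurableType d} {R : realType}
  (P : probability T R) (A B : T -> R) : R :=
  fine (covariance P A B) /
    (Num.sqrt (fine (variance P A)) * Num.sqrt (fine (variance P B))).

(* M (weights w') is an (s,eps)-reduction image of N (weights w): same graph
   (same widths, fully connected), at most s <= N distinct weight values, and
   the predictions sign(Y_s), sign(Y_N) differ with probability <= eps. *)
Definition reduction_image {d} {T : measurableType d} {R : realType}
  (P : probability T R) (n : nat -> nat) (H : nat) (rho : R)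
  (X : npath n H -> T -> R) (w w' : nat -> nat -> nat -> R) (s : nat) (eps : R)
  : Prop :=
  [/\ (s <= nweights n H)%N, (ndistinct n H w' <= s)%N, 0 <= eps <= 1 &
   (P [set t | rsign (output rho w' X) t != rsign (output rho w X) t]
      <= eps%:E)%E].

From HB Require Import structures.
From mathcomp Require Import all_boot all_order all_algebra.
From mathcomp Require Import all_classical all_reals all_analysis.
From mathcomp Require Import lra.
Import Order.TTheory GRing.Theory Num.Theory.
Import measurable_realfun.
Local Open Scope classical_set_scope.
Local Open Scope ring_scope.
Set Implicit Arguments. Unset Strict Implicit. Unset Printing Implicit Defensive.

(** Both outputs are linear combinations [sum_p a_p X_p] of the independent
    standard normals [X_p], and positivity of the sign variances forces some
    [a_p] to be nonzero.  Such a combination has a symmetric law with no atom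
    at 0: adding one term at a time, the pair (partial sum, next [X_p]) has
    the product law, which inherits symmetry from its factors and gives
    measure 0 to the line [z1 + a_p z2 = 0].  Hence both signs are centred
    with second moment 1, their correlation is
    [E[sg Y_s sg Y_N] >= 1 - 2 P(sg Y_s <> sg Y_N) >= 1 - 2 eps], and
    [1 - 2 eps >= (1 - 2 eps) / (1 + 2 eps)]. *)

Definition symmetric_measure (R : realType) (m : set R -> \bar R) : Prop :=
  forall B : set R, measurable B -> m (-%R @^-1` B) = m B.

Section product_measure_on_R2.
Local Open Scope ereal_scope.
Context (R : realType) (m1 m2 : {sigma_finite_measure set R -> \bar R}).

Lemma product_measure_mscale (c : {nonneg R}) E : measurable E ->
  (mscale c m1 \x m2) E = c%:num%:E * (m1 \x m2) E.
Proof.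
by move=> mE; rewrite /product_measure1 ge0_integral_mscale//; exact: measurable_fun_xsection.
Qed.

Lemma product_measure_oppr : symmetric_measure m1 -> symmetric_measure m2 ->
  forall E, measurable E ->
  (m1 \x m2) ((fun z : R * R => (- z.1, - z.2)%R) @^-1` E) = (m1 \x m2) E.
Proof.
move=> m1N m2N E mE; set opp2 := fun z : R * R => _.
have mopp2 : measurable_fun setT opp2.
  by apply: measurable_fun_pair; apply: measurableT_comp => //; exact: oppr_measurable.
rewrite [RHS](product_measure_unique (m' := pushforward (m1 \x m2) opp2)) => // A B mA mB.
have mNA : measurable (-%R @^-1` A) by rewrite -[_ @^-1` _]setTI; exact: oppr_measurable.
have mNB : measurable (-%R @^-1` B) by rewrite -[_ @^-1` _]setTI; exact: oppr_measurable.
transitivity ((m1 \x m2) ((-%R @^-1` A) `*` (-%R @^-1` B))); first by [].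
by rewrite product_measure1E//; congr (_ * _); [exact: m1N | exact: m2N].
Qed.

Lemma product_measure_line_null (c : R) : c != 0%R -> (forall x, m2 [set x] = 0) ->
  (m1 \x m2) [set z | z.1 + c * z.2 = 0]%R = 0.
Proof.
move=> c0 m2_atomless; apply: integral0_eq => x _ /=.
rewrite (_ : xsection _ x = [set (- x / c)%R]) //.
apply/seteqP; split => y; rewrite /xsection /= in_setE /=.
- by move=> /eqP; rewrite addrC addr_eq0 => /eqP <-; rewrite mulrC mulKf.
- by move=> ->; rewrite mulrC divfK// subrr.
Qed.
End product_measure_on_R2.

Section law_on.
Local Open Scope ereal_scope.
Context d d' (T : measurableType d) (T' : measurableType d') (R : realType)
  (P : probability T R) (D : set T) (mD : measurable D) (f : T -> T')
  (mf : measurable_fun setT f).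

(* The two proof arguments are unused in the body; they make the hypotheses
   of the measure instances below available to instance inference. *)
Definition law_on (_ : measurable D) (_ : measurable_fun setT f) :
    set T' -> \bar R :=
  fun A => P (f @^-1` A `&` D).

Let measurable_preimageI A : measurable A -> measurable (f @^-1` A `&` D).
Proof. by move=> mA; apply: measurableI => //; rewrite -[_ @^-1` _]setTI; exact: mf. Qed.

Let law_on0 : law_on mD mf set0 = 0.
Proof. by rewrite /law_on preimage_set0 set0I measure0. Qed.

Let law_on_ge0 A : 0 <= law_on mD mf A.
Proof. by []. Qed.

Let law_on_sigma_additive : semi_sigma_additive (law_on mD mf).
Proof.
move=> F mF tF mUF; rewrite /law_on preimage_bigcup setI_bigcupl.
apply: measure_semi_sigma_additive.
- by move=> n; exact: measurable_preimageI.
- apply/trivIsetP => /= i j _ _ ij; rewrite setIACA -preimage_setI.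
  by move/trivIsetP : tF => /(_ _ _ _ _ ij) ->//; rewrite preimage_set0 set0I.
- by rewrite -setI_bigcupl -preimage_bigcup; exact: measurable_preimageI.
Qed.

HB.instance Definition _ := isMeasure.Build _ _ _
  (law_on mD mf) law_on0 law_on_ge0 law_on_sigma_additive.

Let law_on_fin : fin_num_fun (law_on mD mf).
Proof. by move=> A mA; rewrite fin_num_measure//; exact: measurable_preimageI. Qed.

HB.instance Definition _ := @Measure_isFinite.Build _ T' _ (law_on mD mf) law_on_fin.

End law_on.

Section std_normal_law.
Local Open Scope ereal_scope.
Context (R : realType).

(* [normal_prob] is typed over the sigma-algebra generated by the intervals
   rather than over the canonical measurable type of [R]; this copy lives on
   the latter. *)
Definition std_normal_law : set R -> \bar R := normal_prob 0 1.

Let std_normal_law0 : std_normal_law set0 = 0.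
Proof. exact: measure0. Qed.

Let std_normal_law_ge0 A : 0 <= std_normal_law A.
Proof. exact: measure_ge0. Qed.

Let std_normal_law_sigma_additive : semi_sigma_additive std_normal_law.
Proof. exact: (@measure_semi_sigma_additive _ _ _ (normal_prob (0 : R) 1)). Qed.

HB.instance Definition _ := isMeasure.Build _ R R std_normal_law
  std_normal_law0 std_normal_law_ge0 std_normal_law_sigma_additive.

Let std_normal_lawT : std_normal_law setT = 1.
Proof. exact: probability_setT. Qed.

HB.instance Definition _ := Measure_isProbability.Build _ R R std_normal_law std_normal_lawT.

Lemma std_normal_law_set1 (x : R) : std_normal_law [set x] = 0.
Proof.
apply: (@normal_prob_dominates R 0 1 [set x]) => // A mA Ax.
apply/eqP; rewrite eq_le measure_ge0 andbT -(lebesgue_measure_set1 x).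
by rewrite le_measure// inE//; exact: measurable_set1.
Qed.

Lemma std_normal_law_symmetric : symmetric_measure std_normal_law.
Proof.
move=> B mB; rewrite /std_normal_law /normal_prob.
have mN : measurable_fun [set: measurableTypeR R]
    (-%R : measurableTypeR R -> measurableTypeR R) by exact: oppr_measurable.
have pdfN x : normal_pdf 0 1 (- x) = normal_pdf 0 1 x :> R.
  by rewrite /normal_pdf oner_eq0 /normal_fun !subr0 sqrrN.
transitivity (\int[lebesgue_measure]_(x in (-%R : measurableTypeR R -> _) @^-1` B)
   (((fun x => (normal_pdf 0 1 x)%:E) \o (-%R : measurableTypeR R -> _)) x)).
  by apply: eq_integral => x _ /=; rewrite pdfN.
rewrite -(ge0_integral_pushforward mN) //.
- by apply: eq_measure_integral => //= A mA _; exact: lebesgue_measureN.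
- apply/measurable_EFinP.
  exact: measurable_funS measurableT (@subsetT _ B) (measurable_normal_pdf 0 1).
- by move=> y _; rewrite lee_fin normal_pdf_ge0.
Qed.

End std_normal_law.

Lemma sgrM_ge (R : realDomainType) (x y : R) :
  1 - 2 * (Num.sg x != Num.sg y)%:R - (x == 0)%:R <= Num.sg x * Num.sg y.
Proof. by case: sgrP => _; case: sgrP => _; case: eqP => /=; lra. Qed.

Section sign_of_random_variable.
Local Open Scope ereal_scope.
Context d (T : measurableType d) (R : realType) (P : probability T R).

Lemma bounded_Lfun1 (f : T -> R) (M : R) : measurable_fun setT f ->
  (forall t, `|f t| <= M)%R -> f \in Lfun P 1.
Proof.
move=> mf fM; apply/Lfun1_integrable; apply: measurable_bounded_integrable => //.
  exact: le_lt_trans (probability_le1 P measurableT) (ltry _).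
exists M; split; first exact: num_real.
by move=> N MN x _ /=; exact: le_trans (fM x) (ltW MN).
Qed.

Lemma indic_Lfun1 (A : set T) : measurable A -> (\1_A : T -> R) \in Lfun P 1.
Proof.
move=> mA; apply: (bounded_Lfun1 (M := 1%R)); first exact: measurable_indic.
by move=> t; rewrite indicE; case: (t \in A); rewrite ?normr1 ?normr0.
Qed.

Lemma rsign_indic (Y : T -> R) :
  rsign Y = (\1_(Y @^-1` `]0%R, +oo[) \- \1_(Y @^-1` `]-oo, 0%R[))%R.
Proof.
apply/funext => t; rewrite /rsign /= !indicE.
rewrite -[t \in Y @^-1` _]/(Y t \in `]0%R, +oo[%classic).
rewrite -[t \in Y @^-1` `]-oo, _[]/(Y t \in `]-oo, 0%R[%classic) !mem_setE !in_itv /=.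
by case: sgrP; rewrite ?subr0 ?sub0r.
Qed.

Lemma measurable_rsign (Y : T -> R) :
  measurable_fun setT Y -> measurable_fun setT (rsign Y).
Proof.
move=> mY; rewrite rsign_indic; apply: measurable_funB; apply: measurable_indic;
  by rewrite -[_ @^-1` _]setTI; apply: mY => //; exact: measurable_itv.
Qed.

Lemma rsign_Lfun1 (Y : T -> R) :
  measurable_fun setT Y -> rsign Y \in Lfun P 1.
Proof.
move=> mY; rewrite rsign_indic rpredB// indic_Lfun1//;
  by rewrite -[_ @^-1` _]setTI; apply: mY => //; exact: measurable_itv.
Qed.

Lemma rsignM_Lfun1 (Y1 Y2 : T -> R) : measurable_fun setT Y1 ->
  measurable_fun setT Y2 -> (rsign Y1 * rsign Y2)%R \in Lfun P 1.
Proof.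
move=> mY1 mY2; apply: (bounded_Lfun1 (M := 1%R)).
  by apply: measurable_funM; exact: measurable_rsign.
by move=> t; rewrite /rsign /= normrM !normr_sg; case: eqP; case: eqP; rewrite /= ?mulr1 ?mulr0.
Qed.

Lemma expectation_rsign (Y : T -> R) : measurable_fun setT Y ->
  symmetric_measure (pushforward P Y) -> 'E_P[rsign Y] = 0.
Proof.
move=> mY Ysym.
have mYI (i : interval R) : measurable (Y @^-1` [set` i]).
  by rewrite -[_ @^-1` _]setTI; apply: mY => //; exact: measurable_itv.
rewrite rsign_indic expectationB ?indic_Lfun1// !expectation_indic//.
have <- : -%R @^-1` `]-oo, 0%R[ = `]0%R, +oo[%classic :> set R.
  by apply/seteqP; split => x; rewrite /= !in_itv /= ?oppr_lt0 ?oppr_gt0 ?andbT.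
by rewrite [X in X - _]Ysym ?subee ?fin_num_measure//; exact: measurable_itv.
Qed.

Lemma expectation_rsign_sqr (Y : T -> R) : measurable_fun setT Y ->
  P (Y @^-1` [set 0%R]) = 0 -> 'E_P[rsign Y * rsign Y] = 1.
Proof.
move=> mY Y0.
have mZ : measurable (Y @^-1` [set 0%R]).
  by rewrite -[_ @^-1` _]setTI; apply: mY => //; exact: measurable_set1.
have -> : (rsign Y * rsign Y = cst 1 \- \1_(Y @^-1` [set 0%R]))%R.
  apply/funext => t; rewrite /rsign !fctE /= indicE.
  rewrite -[t \in _]/(Y t \in [set 0%R]) in_set1.
  by case: sgrP => _ /=; lra.
rewrite expectationB ?Lfun_cst ?indic_Lfun1// expectation_cst expectation_indic//.
by rewrite Y0 sube0.
Qed.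

Lemma expectation_rsignM_ge (Y1 Y2 : T -> R) :
  measurable_fun setT Y1 -> measurable_fun setT Y2 ->
  P (Y1 @^-1` [set 0%R]) = 0 ->
  (1 - 2 * fine (P [set t | rsign Y1 t != rsign Y2 t]))%:E
    <= 'E_P[rsign Y1 * rsign Y2].
Proof.
move=> mY1 mY2 Y10.
set D := [set t | _ != _]; set Z := Y1 @^-1` [set 0%R].
have mD : measurable D.
  rewrite (_ : D = (rsign Y1 \- rsign Y2)%R @^-1` [set~ 0%R]).
    rewrite -[_ @^-1` _]setTI.
    apply: (measurable_funB (measurable_rsign mY1) (measurable_rsign mY2)) => //.
    exact: measurableC (measurable_set1 _).
  rewrite /D; apply/seteqP; split => t /=.
  - by move=> /eqP h /eqP; rewrite subr_eq0 => /eqP.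
  - by move=> h; apply/eqP => e; apply: h; rewrite e subrr.
have mZ : measurable Z.
  by rewrite /Z -[_ @^-1` _]setTI; apply: mY1 => //; exact: measurable_set1.
have lD := indic_Lfun1 mD; have lZ := indic_Lfun1 mZ.
have l1 : cst 1%R \in Lfun P 1 by exact: Lfun_cst.
pose g : T -> R := (cst 1 \- \1_D \- \1_D \- \1_Z)%R.
have g_Lfun1 : g \in Lfun P 1 by rewrite !rpredB.
have -> : (1 - 2 * fine (P D))%:E = 'E_P[g].
  rewrite !expectationB ?rpredB//.
  rewrite expectation_cst !expectation_indic// Y10 sube0.
  by rewrite -(fineK (fin_num_measure P D mD)) -!EFinB; congr _%:E; lra.
rewrite !expectation.unlock; apply: le_integral => //.
- exact/Lfun1_integrable.
- exact/Lfun1_integrable/rsignM_Lfun1.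
move=> t _; rewrite lee_fin /g /= !indicE.
have -> : (t \in D) = (rsign Y1 t != rsign Y2 t).
  by apply/idP/idP => h; [exact: set_mem h | exact: mem_set h].
rewrite -[t \in Z]/(Y1 t \in [set 0%R]) in_set1 fctE.
by have := sgrM_ge (Y1 t) (Y2 t); rewrite /rsign; lra.
Qed.

Lemma corr_rsign_ge (Y1 Y2 : T -> R) (eps : R) :
  measurable_fun setT Y1 -> measurable_fun setT Y2 ->
  symmetric_measure (pushforward P Y1) -> P (Y1 @^-1` [set 0%R]) = 0 ->
  symmetric_measure (pushforward P Y2) -> P (Y2 @^-1` [set 0%R]) = 0 ->
  P [set t | rsign Y1 t != rsign Y2 t] <= eps%:E ->
  (1 - 2 * eps <= corr P (rsign Y1) (rsign Y2))%R.
Proof.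
move=> mY1 mY2 Y1sym Y10 Y2sym Y20 Pdiff.
have covE (Z1 Z2 : T -> R) : measurable_fun setT Z1 -> measurable_fun setT Z2 ->
    symmetric_measure (pushforward P Z1) ->
    covariance P (rsign Z1) (rsign Z2) = 'E_P[rsign Z1 * rsign Z2].
  move=> mZ1 mZ2 Z1sym.
  rewrite covarianceE ?rsign_Lfun1 ?rsignM_Lfun1// expectation_rsign//.
  by rewrite mul0e sube0.
rewrite /corr /variance !covE// !expectation_rsign_sqr//= sqrtr1 mulr1 divr1.
have := expectation_rsignM_ge mY1 mY2 Y10.
rewrite -(fineK (expectation_fin_num (rsignM_Lfun1 mY1 mY2))) lee_fin.
have PdiffE : (fine (P [set t | rsign Y1 t != rsign Y2 t]) <= eps)%R.
  have PdiffT : P [set t | rsign Y1 t != rsign Y2 t] \is a fin_num.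
    by rewrite ge0_fin_numE// (le_lt_trans Pdiff) ?ltry.
  by rewrite -lee_fin fineK.
lra.
Qed.

Lemma variance_rsign_gt0 (Y : T -> R) :
  0 < variance P (rsign Y) -> exists t, Y t != 0%R.
Proof.
move=> Ypos; apply/not_existsP => Y0; move: Ypos.
have -> : rsign Y = cst 0%R.
  by apply/funext => t; rewrite /rsign; have /negP/negPn/eqP -> := Y0 t; rewrite sgr0.
by rewrite variance_cst ltxx.
Qed.
End sign_of_random_variable.

Section linear_combination.
Local Open Scope ereal_scope.
Context d (T : measurableType d) (R : realType) (P : probability T R)
  (I : finType) (mu : probability R R) (X : I -> T -> R) (a : I -> R).
Hypotheses (mu_sym : symmetric_measure mu) (mu_set1 : forall x, mu [set x] = 0)
  (mX : forall i, measurable_fun setT (X i))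
  (lawX : forall i B, measurable B -> P (X i @^-1` B) = mu B)
  (indepX : mutually_independent P X).

Definition lincomb (s : seq I) (t : T) : R := \sum_(i <- s) a i * X i t.

Definition joint_event (B : I -> set R) : set T :=
  \bigcap_(i in [set: I]) X i @^-1` B i.

Lemma lincomb_nil : lincomb [::] = cst 0%R.
Proof. by apply/funext => t; rewrite /lincomb big_nil. Qed.

Lemma lincomb_cons p s :
  lincomb (p :: s) = (fun t => lincomb s t + a p * X p t)%R.
Proof. by apply/funext => t; rewrite /lincomb big_cons addrC. Qed.

Lemma measurable_lincomb s : measurable_fun setT (lincomb s).
Proof.
elim: s => [|p s IHs]; first by rewrite lincomb_nil.
by rewrite lincomb_cons; apply: measurable_funD => //; exact: measurable_funM.
Qed.

Lemma lincomb_neq0 s t : lincomb s t != 0%R -> exists2 i, i \in s & a i != 0%R.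
Proof.
apply: contraNP => /forall2NP a0; apply/eqP; rewrite /lincomb big1_seq// => i /andP[_ si].
by have [//|/negP/negPn/eqP ->] := a0 i; rewrite mul0r.
Qed.

Lemma measurable_joint_event B :
  (forall i, measurable (B i)) -> measurable (joint_event B).
Proof.
move=> mB; apply: fin_bigcap_measurable; first exact: finite_finset.
by move=> i _; rewrite -[_ @^-1` _]setTI; exact: mX.
Qed.

Lemma probability_joint_event B : (forall i, measurable (B i)) ->
  P (joint_event B) = \prod_(i : I) mu (B i).
Proof. by move=> mB; rewrite /joint_event indepX//; apply: eq_bigr => i _; exact: lawX. Qed.

Lemma joint_eventT : joint_event (fun _ => setT) = setT.
Proof. by apply/seteqP; split => t // _ i _. Qed.

Let update (B : I -> set R) p (Bp : set R) : I -> set R :=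
  fun i => if i == p then Bp else B i.

Let measurable_update B p Bp : (forall i, measurable (B i)) -> measurable Bp ->
  forall i, measurable (update B p Bp i).
Proof. by move=> mB mBp i; rewrite /update; case: eqP. Qed.

Let joint_event_update B p Bp : B p = setT ->
  joint_event (update B p Bp) = X p @^-1` Bp `&` joint_event B.
Proof.
move=> Bp_setT; apply/seteqP; split => t.
  move=> Jt; split; first by have := Jt p Logic.I; rewrite /update eqxx.
  by move=> i _; have := Jt i Logic.I; rewrite /update; case: eqP => [->|//]; rewrite Bp_setT.
by move=> [Xpt Jt] i _; rewrite /update; case: eqP => [->//|_]; exact: Jt.
Qed.

Lemma probability_joint_event_update B p Bp : (forall i, measurable (B i)) ->
  measurable Bp -> B p = setT ->
  P (joint_event (update B p Bp)) = mu Bp * P (joint_event B).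
Proof.
move=> mB mBp Bp_setT.
rewrite !probability_joint_event//; last exact: measurable_update.
rewrite (bigD1 p)//= [in RHS](bigD1 p)//= /update eqxx Bp_setT probability_setT mul1e.
by congr (_ * _); apply: eq_bigr => i /negPf ->.
Qed.

Definition lincomb_indep (s : seq I) : Prop :=
  forall B C, (forall i, measurable (B i)) -> (forall i, i \in s -> B i = setT) ->
  measurable C ->
  P (lincomb s @^-1` C `&` joint_event B) = P (lincomb s @^-1` C) * P (joint_event B).

Lemma lincomb_pair_law_on s p B : p \notin s -> lincomb_indep s ->
  (forall i, measurable (B i)) -> (forall i, i \in p :: s -> B i = setT) ->
  forall E, measurable E ->
  P ((fun t => (lincomb s t, X p t)) @^-1` E `&` joint_event B) =
    P (joint_event B) * (law_on P measurableT (measurable_lincomb s) \x mu) E.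
Proof.
move=> ps s_indep mB Btriv E mE; set V := fun t => _.
have mV : measurable_fun setT V by exact: measurable_fun_pair (measurable_lincomb s) (mX p).
have mJ := measurable_joint_event mB.
pose c : {nonneg R} := NngNum (fine_ge0 (measure_ge0 P (joint_event B))).
have cE : c%:num%:E = P (joint_event B) by rewrite /= fineK// fin_num_measure.
rewrite -cE -product_measure_mscale//.
rewrite (product_measure_unique (m' := law_on P mJ mV)) => // A Bp mA mBp.
have Bp_setT : B p = setT by apply: Btriv; rewrite mem_head.
transitivity (P (lincomb s @^-1` A `&` joint_event (update B p Bp))).
  by rewrite joint_event_update// setIA.
rewrite s_indep//; last 2 first.
- exact: measurable_update.
- move=> i si; rewrite /update; case: eqP => [ip|_]; first by move: ps; rewrite -ip si.
  by apply: Btriv; rewrite inE si orbT.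
rewrite probability_joint_event_update//.
transitivity (c%:num%:E * P (lincomb s @^-1` A `&` setT) * mu Bp); last by [].
by rewrite cE setIT [mu Bp * _]muleC muleA [P (lincomb s @^-1` A) * _]muleC.
Qed.

Lemma lincomb_pair_law s p : p \notin s -> lincomb_indep s ->
  forall E, measurable E ->
  P ((fun t => (lincomb s t, X p t)) @^-1` E) =
    (law_on P measurableT (measurable_lincomb s) \x mu) E.
Proof.
move=> ps s_indep E mE.
have := lincomb_pair_law_on ps s_indep (fun _ => measurableT) (fun _ _ => erefl) mE.
by rewrite joint_eventT setIT probability_setT mul1e.
Qed.

Let lincomb_cons_preimage p s C : lincomb (p :: s) @^-1` C =
  (fun t => (lincomb s t, X p t)) @^-1` ((fun z : R * R => z.1 + a p * z.2)%R @^-1` C).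
Proof. by rewrite lincomb_cons. Qed.

Let measurable_cons_preimage p C : measurable C ->
  measurable ((fun z : R * R => z.1 + a p * z.2)%R @^-1` C).
Proof.
move=> mC; rewrite -[_ @^-1` _]setTI.
have : measurable_fun setT (fun z : R * R => z.1 + a p * z.2)%R.
  apply: measurable_funD; first exact: measurable_fst.
  by apply: measurable_funM => //; exact: measurable_snd.
exact.
Qed.

Lemma lincomb_indep_cons p s : p \notin s -> lincomb_indep s -> lincomb_indep (p :: s).
Proof.
move=> ps s_indep B C mB Btriv mC.
have mfC := measurable_cons_preimage p mC.
by rewrite !lincomb_cons_preimage lincomb_pair_law_on ?lincomb_pair_law// muleC.
Qed.

Lemma lincomb_indep_uniq s : uniq s -> lincomb_indep s.
Proof.
elim: s => [_ B C mB _ mC|p s IHs /andP[ps us]]; last exact: lincomb_indep_cons (IHs us).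
rewrite lincomb_nil preimage_cst; case: ifP => _.
  by rewrite setTI probability_setT mul1e.
by rewrite set0I measure0 mul0e.
Qed.

Lemma lincomb_symmetric s : uniq s -> symmetric_measure (pushforward P (lincomb s)).
Proof.
elim: s => [_ C mC|p s IHs /andP[ps us] C mC].
  by rewrite /pushforward lincomb_nil /preimage /= oppr0.
have lawN : symmetric_measure (law_on P measurableT (measurable_lincomb s)).
  by move=> B mB; rewrite /law_on /= !setIT; exact: IHs.
have mNC : measurable (-%R @^-1` C) by rewrite -[_ @^-1` _]setTI; exact: oppr_measurable.
have mfC := measurable_cons_preimage p mC.
have mfNC := measurable_cons_preimage p mNC.
have s_indep := lincomb_indep_uniq us.
rewrite /pushforward !lincomb_cons_preimage !lincomb_pair_law//.
rewrite -[in RHS](product_measure_oppr lawN mu_sym mfC).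
by congr (_ _); apply/funext => z; rewrite /preimage /= opprD mulrN.
Qed.

Lemma probability_lincomb_eq0 s : uniq s -> (exists2 i, i \in s & a i != 0%R) ->
  P (lincomb s @^-1` [set 0%R]) = 0.
Proof.
elim: s => [_ [//]|p s IHs /andP[ps us] [i si ai]].
have [ap0|ap] := eqVneq (a p) 0%R.
  have -> : lincomb (p :: s) = lincomb s.
    by rewrite lincomb_cons ap0; apply/funext => t; rewrite mul0r addr0.
  apply: IHs => //; exists i => //; move: si; rewrite inE => /orP[/eqP ip|//].
  by move: ai; rewrite ip ap0 eqxx.
have mf0 := measurable_cons_preimage p (measurable_set1 (0 : R)).
rewrite lincomb_cons_preimage lincomb_pair_law//; last exact: lincomb_indep_uniq.
exact: product_measure_line_null.
Qed.
End linear_combination.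

Lemma output_lincomb d (T : measurableType d) (R : realType) (n : nat -> nat)
  (H : nat) (rho : R) (w : nat -> nat -> nat -> R) (X : npath n H -> T -> R) :
  output rho w X =
    lincomb X (fun p => qcoef n H * rho * path_weight w p) (index_enum (npath n H)).
Proof.
apply/funext => t; rewrite /output /lincomb big_distrr; apply: eq_bigr => p _.
by rewrite -!mulrA; congr (_ * _); rewrite mulrC -mulrA.
Qed.

Theorem theorem3p2 (R : realType) (dT : measure_display) (T : measurableType dT)
  (P : probability T R) (H : nat) (n : nat -> nat) (rho : R)
  (w w' : nat -> nat -> nat -> R) (X : npath n H -> T -> R) (s : nat) (eps : R) :
  (0 < H)%N ->
  (forall i, (i <= H)%N -> (0 < n i)%N) ->
  n H = 1%N ->
  0 < rho <= 1 ->
  (forall p, std_normal P (X p)) ->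
  mutually_independent P X ->
  reduction_image P rho X w w' s eps ->
  0 <= eps <= 1 / 2 ->
  (0 < variance P (rsign (output rho w X)))%E ->
  (0 < variance P (rsign (output rho w' X)))%E ->
  corr P (rsign (output rho w' X)) (rsign (output rho w X))
    >= (1 - 2 * eps) / (1 + 2 * eps).
Proof.
move=> _ _ _ _ X_normal indepX [_ _ _ Pdiff] /andP[eps_ge0 eps_le] var_pos var'_pos.
have mX p : measurable_fun setT (X p) := (X_normal p).1.
have lawX p B : measurable B -> P (X p @^-1` B) = std_normal_law B := (X_normal p).2 B.
have output_props v : (0 < variance P (rsign (output rho v X)))%E ->
    [/\ measurable_fun setT (output rho v X),
        symmetric_measure (pushforward P (output rho v X)) &
        P (output rho v X @^-1` [set 0%R]) = 0%E].
  move=> /variance_rsign_gt0[t]; rewrite !output_lincomb => /lincomb_neq0 a_neq0.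
  have uniq_paths := index_enum_uniq (npath n H).
  split; first exact: measurable_lincomb.
    exact: (lincomb_symmetric _ (@std_normal_law_symmetric R) mX lawX indepX uniq_paths).
  exact: (probability_lincomb_eq0 (@std_normal_law_set1 R) mX lawX indepX uniq_paths a_neq0).
have [mY symY Y0] := output_props w var_pos.
have [mY' symY' Y'0] := output_props w' var'_pos.
apply: le_trans (corr_rsign_ge mY' mY symY' Y'0 symY Y0 Pdiff).
by rewrite ler_pdivrMr; [nra | lra].
Qed.
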